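(* Let $R$ be a commutative ring, $S$ a subring of $R$, $I$ an ideal of $S$, $n\ge1$, and $f\in(T_n(R))[x]$. Then \[f\in\mathrm{Int}_{T_n(R)}(T_n(S),T_n(I))\iff f_{ij}\in\mathrm{Int}_R(T_{n-j+1}(S),T_{n-j+1}(I))\text{ for all }1\le i\le j\le n,\] and \[f\in\mathrm{Int}^{\ell}_{T_n(R)}(T_n(S),T_n(I))\iff f_{ij}\in\mathrm{Int}_R(T_{i}(S),T_{i}(I))\text{ for all }1\le i\le j\le n.\]
   Context: $T_n(A)$ denotes the ring of upper triangular $n\times n$ matrices over a ring $A$. For $f=\sum_k F_kx^k\in(T_n(R))[x]$ with $F_k\in T_n(R)$, right substitution is $f(C)=\sum_kF_kC^k$ and left substitution is $f(C)_\ell=\sum_kC^kF_k$. Writing $f_{ij}^{(k)}$ for the $(i,j)$-entry of $F_k$, set $f_{ij}=\sum_k f_{ij}^{(k)}x^k\in R[x]$ (so $f_{ij}=0$ for $i>j$). Definitions: $\mathrm{Int}_R(T_m(S),T_m(I))=\{g\in R[x]\mid \forall C\in T_m(S):\ g(C)\in T_m(I)\}$ (usual evaluation); $\mathrm{Int}_{T_n(R)}(T_n(S),T_n(I))=\{f\in(T_n(R))[x]\mid\forall C\in T_n(S):\ f(C)\in T_n(I)\}$; $\mathrm{Int}^{\ell}_{T_n(R)}(T_n(S),T_n(I))=\{f\in(T_n(R))[x]\mid\forall C\in T_n(S):\ f(C)_\ell\in T_n(I)\}$. *)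

From HB Require Import structures.
From mathcomp Require Import all_boot all_order all_algebra.
Set Implicit Arguments. Unset Strict Implicit. Unset Printing Implicit Defensive.
Import GRing.Theory.
Local Open Scope ring_scope.

Section Defs.
Variable R : comRingType.

Definition is_subring (S : {pred R}) : Prop :=
  1 \in S /\ (forall x y, x \in S -> y \in S -> x - y \in S) /\
  (forall x y, x \in S -> y \in S -> x * y \in S).

Definition is_ideal_of (S I : {pred R}) : Prop :=
  {subset I <= S} /\ 0 \in I /\
  (forall x y, x \in I -> y \in I -> x - y \in I) /\
  (forall s x, s \in S -> x \in I -> s * x \in I).

Definition upper_tri (m : nat) (A : 'M[R]_m) : Prop :=
  forall i j : 'I_m, (j < i)%N -> A i j = 0.

Definition in_T (m : nat) (P : {pred R}) (A : 'M[R]_m) : Prop :=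
  upper_tri A /\ forall i j : 'I_m, (i <= j)%N -> A i j \in P.

Definition mx_eval (m : nat) (g : {poly R}) (C : 'M[R]_m) : 'M[R]_m :=
  \sum_(k < size g) g`_k *: C ^+ k.

Definition Int_R (m : nat) (S I : {pred R}) (g : {poly R}) : Prop :=
  forall C : 'M[R]_m, in_T S C -> in_T I (mx_eval g C).

Definition rsubst (n : nat) (f : {poly 'M[R]_n.+1}) (C : 'M[R]_n.+1) :=
  \sum_(k < size f) f`_k * C ^+ k.

Definition lsubst (n : nat) (f : {poly 'M[R]_n.+1}) (C : 'M[R]_n.+1) :=
  \sum_(k < size f) C ^+ k * f`_k.

Definition poly_over_T (n : nat) (f : {poly 'M[R]_n.+1}) : Prop :=
  forall k, upper_tri f`_k.

Definition Int_T (n : nat) (S I : {pred R}) (f : {poly 'M[R]_n.+1}) : Prop :=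
  poly_over_T f /\ forall C, in_T S C -> in_T I (rsubst f C).

Definition Int_T_l (n : nat) (S I : {pred R}) (f : {poly 'M[R]_n.+1}) : Prop :=
  poly_over_T f /\ forall C, in_T S C -> in_T I (lsubst f C).

Definition entry_poly (n : nat) (f : {poly 'M[R]_n.+1}) (i j : 'I_n.+1) : {poly R} :=
  \poly_(k < size f) (f`_k i j).

End Defs.

(* Since f(C) = sum_k F_k C^k, the (i,j) entry of f(C) is sum_l (f_il(C))_lj.
   For upper triangular C, the (l,j) entry of g(C) only depends on the
   trailing principal block of C starting at l (of size n-l+1), because
   contiguous principal blocks of upper triangular matrices multiply like the
   matrices themselves.  This gives the implication from the f_ij to f.
   Conversely, placing an arbitrary C' in T_{n-l+1}(S) as the trailing block
   of an otherwise zero matrix isolates f_il(C') in (f(C))_{i,*}, up to terms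
   handled by descending induction on the column l.
   Left substitution reduces to right substitution through the anti-transpose
   A |-> (A_{n+1-j,n+1-i}), an anti-automorphism of T_n(R) since R is
   commutative; it maps f_ij to f_{n+1-j,n+1-i}. *)

From HB Require Import structures.
From mathcomp Require Import all_boot all_order all_algebra zify.
Set Implicit Arguments. Unset Strict Implicit. Unset Printing Implicit Defensive.
Import GRing.Theory.
Local Open Scope ring_scope.

Section Blocks.
Variable R : comRingType.

(* Natural-number indexing, with junk value [0] outside the matrix, lets us
   take principal blocks at arbitrary offsets without casting index types. *)
Definition mx_at N (A : 'M[R]_N) (a b : nat) : R :=
  if insub a is Some i then if insub b is Some j then A i j else 0 else 0.

Lemma mx_atP N (A : 'M[R]_N) a b (P : R -> Prop) :
  P 0 -> (forall i j : 'I_N, i = a :> nat -> j = b :> nat -> P (A i j)) ->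
  P (mx_at A a b).
Proof.
move=> P0 PA; rewrite /mx_at.
by case: insubP => [i _ ei|//]; case: insubP => [j _ ej|//]; apply: PA.
Qed.

Lemma mx_at_ord N (A : 'M[R]_N) (i j : 'I_N) : mx_at A i j = A i j.
Proof. by rewrite /mx_at !valK. Qed.

Lemma mx_atE N (A : 'M[R]_N) a b (ha : (a < N)%N) (hb : (b < N)%N) :
  mx_at A a b = A (Ordinal ha) (Ordinal hb).
Proof. by rewrite -mx_at_ord. Qed.

Lemma mx_at_out N (A : 'M[R]_N) a b :
  ~~ ((a < N) && (b < N))%N -> mx_at A a b = 0.
Proof.
move=> out; apply: (mx_atP (P := eq^~ 0)) => // i j ei ej.
by move: out; rewrite -ei -ej !ltn_ord.
Qed.

Lemma mx_at_upper N (A : 'M[R]_N) a b :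
  upper_tri A -> (b < a)%N -> mx_at A a b = 0.
Proof.
move=> hA ba; apply: (mx_atP (P := eq^~ 0)) => // i j ei ej.
by apply: hA; rewrite ei ej.
Qed.

Lemma mx_at_in_T N (P : {pred R}) (A : 'M[R]_N) a b :
  in_T P A -> 0 \in P -> (a <= b)%N -> mx_at A a b \in P.
Proof.
move=> [_ hA] P0 ab; apply: (mx_atP (P := fun x => x \in P)) => // i j ei ej.
by apply: hA; rewrite ei ej.
Qed.

Lemma mx_at_sum N (J : Type) (r : seq J) (F : J -> 'M[R]_N) a b :
  mx_at (\sum_(k <- r) F k) a b = \sum_(k <- r) mx_at (F k) a b.
Proof.
have [/andP[ha hb]|out] := boolP ((a < N) && (b < N))%N.
  by rewrite !(mx_atE _ ha hb) summxE; apply: eq_bigr => k _; rewrite (mx_atE _ ha hb).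
by rewrite mx_at_out // big1 // => k _; rewrite mx_at_out.
Qed.

Lemma mx_at_scale N (A : 'M[R]_N) c a b : mx_at (c *: A) a b = c * mx_at A a b.
Proof.
have [/andP[ha hb]|out] := boolP ((a < N) && (b < N))%N.
  by rewrite !(mx_atE _ ha hb) mxE.
by rewrite !mx_at_out // mulr0.
Qed.

Lemma big_nat_window (G : nat -> R) N off m : (off + m <= N)%N ->
  (forall l, (l < off)%N -> G l = 0) -> (forall l, (off + m <= l)%N -> G l = 0) ->
  \sum_(0 <= l < N) G l = \sum_(l < m) G (off + l).
Proof.
move=> hN G_lo G_hi.
rewrite (@big_cat_nat _ _ _ off) //=; last exact: leq_trans (leq_addr m off) hN.
rewrite (@big_cat_nat _ _ _ (off + m) off) ?leq_addr //=.
rewrite big1_seq => [|l /andP[_]]; last by rewrite mem_index_iota => /andP[_ /G_lo].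
rewrite [X in _ + (_ + X)]big1_seq => [|l /andP[_]]; last first.
  by rewrite mem_index_iota => /andP[/G_hi].
rewrite add0r addr0 -{1}(add0n off) big_addn addKn big_mkord.
by apply: eq_bigr => l _; rewrite addnC.
Qed.

Lemma mx_at_mul N (A B : 'M[R]_N) a b :
  mx_at (A * B) a b = \sum_(0 <= l < N) mx_at A a l * mx_at B l b.
Proof.
have [/andP[ha hb]|out] := boolP ((a < N) && (b < N))%N.
  rewrite -[a]/(val (Ordinal ha)) -[b]/(val (Ordinal hb)).
  rewrite mx_at_ord -mulmxE mxE big_mkord.
  by apply: eq_bigr => l _; rewrite !mx_at_ord.
rewrite mx_at_out // big1 // => l _.
move: out; rewrite negb_and => /orP[] out.
  by rewrite (@mx_at_out N A) ?mul0r // negb_and out.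
by rewrite (@mx_at_out N B) ?mulr0 // negb_and out orbT.
Qed.

Lemma upper_tri_mul N (A B : 'M[R]_N) :
  upper_tri A -> upper_tri B -> upper_tri (A * B).
Proof.
move=> hA hB i j ji; rewrite -mulmxE mxE big1 // => l _.
have [li|il] := ltnP l i; first by rewrite hA ?mul0r.
by rewrite hB ?mulr0 // (leq_trans ji il).
Qed.

Lemma upper_tri1 N : upper_tri (1 : 'M[R]_N).
Proof. by move=> i j ji; rewrite mxE -val_eqE /= gtn_eqF. Qed.

Lemma upper_tri_exp N (A : 'M[R]_N) k : upper_tri A -> upper_tri (A ^+ k).
Proof.
move=> hA; elim: k => [|k IH]; first exact: upper_tri1.
by rewrite exprS; apply: upper_tri_mul.
Qed.

Lemma upper_tri_sum N (J : Type) (r : seq J) (F : J -> 'M[R]_N) :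
  (forall k, upper_tri (F k)) -> upper_tri (\sum_(k <- r) F k).
Proof. by move=> hF i j ji; rewrite summxE big1 // => k _; apply: hF. Qed.

Lemma upper_tri_mx_eval N (g : {poly R}) (C : 'M[R]_N) :
  upper_tri C -> upper_tri (mx_eval g C).
Proof.
move=> hC; apply: upper_tri_sum => k i j ji.
by rewrite mxE (upper_tri_exp k hC) ?mulr0.
Qed.

Definition window_mx N off m (A : 'M[R]_N) : 'M[R]_m :=
  \matrix_(x, y) mx_at A (off + x) (off + y).

Definition embed_mx N off M (A : 'M[R]_M) : 'M[R]_N :=
  \matrix_(i, j)
    if ((off <= i) && (off <= j))%N then mx_at A (i - off) (j - off) else 0.

Section Window.
Variables (N off m : nat).
Hypothesis window_in : (off + m <= N)%N.

Lemma window_mx1 : window_mx off m (1 : 'M[R]_N) = 1.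
Proof.
apply/matrixP => x y.
have hx : (off + x < N)%N by apply: leq_trans window_in; rewrite ltn_add2l.
have hy : (off + y < N)%N by apply: leq_trans window_in; rewrite ltn_add2l.
by rewrite !mxE (mx_atE _ hx hy) mxE -val_eqE /= eqn_add2l.
Qed.

Lemma window_mx_mul (A B : 'M[R]_N) : upper_tri A -> upper_tri B ->
  window_mx off m (A * B) = window_mx off m A * window_mx off m B.
Proof.
move=> hA hB; apply/matrixP => x y; rewrite -mulmxE !mxE mx_at_mul.
rewrite (@big_nat_window _ N off m window_in).
- by apply: eq_bigr => l _; rewrite !mxE.
- by move=> l lo; rewrite mx_at_upper ?mul0r // (leq_trans lo (leq_addr _ _)).
- by move=> l hi; rewrite (@mx_at_upper N B) ?mulr0 // (leq_trans _ hi) ?ltn_add2l.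
Qed.

Lemma window_mx_exp (A : 'M[R]_N) k : upper_tri A ->
  window_mx off m (A ^+ k) = window_mx off m A ^+ k.
Proof.
move=> hA; elim: k => [|k IH]; first by rewrite !expr0 window_mx1.
by rewrite !exprS window_mx_mul ?IH //; apply: upper_tri_exp.
Qed.

Lemma window_mx_eval (g : {poly R}) (C : 'M[R]_N) : upper_tri C ->
  window_mx off m (mx_eval g C) = mx_eval g (window_mx off m C).
Proof.
move=> hC; apply/matrixP => x y; rewrite /mx_eval mxE mx_at_sum summxE.
by apply: eq_bigr => k _; rewrite mx_at_scale -window_mx_exp // !mxE.
Qed.

End Window.

Lemma mx_at_mx_eval_window N off m (g : {poly R}) (C : 'M[R]_N) x y :
  upper_tri C -> (off + m <= N)%N -> (x < m)%N -> (y < m)%N ->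
  mx_at (mx_eval g C) (off + x) (off + y) = mx_at (mx_eval g (window_mx off m C)) x y.
Proof. by move=> hC hN hx hy; rewrite -window_mx_eval // (mx_atE _ hx hy) mxE. Qed.

Lemma in_T_window N off m (P : {pred R}) (A : 'M[R]_N) :
  in_T P A -> 0 \in P -> in_T P (window_mx off m A).
Proof.
move=> hA P0; split=> x y xy; rewrite mxE.
  by rewrite mx_at_upper ?ltn_add2l //; case: hA.
by rewrite mx_at_in_T ?leq_add2l.
Qed.

Lemma in_T_embed N off M (P : {pred R}) (A : 'M[R]_M) :
  in_T P A -> 0 \in P -> in_T P (embed_mx N off A).
Proof.
move=> hA P0; split=> i j ij; rewrite mxE; case: andP => // -[oi oj].
  by rewrite mx_at_upper ?ltn_sub2rE //; case: hA.
by rewrite mx_at_in_T ?leq_sub2r.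
Qed.

Lemma window_embed N off M (A : 'M[R]_M) :
  (off + M <= N)%N -> window_mx off M (embed_mx N off A) = A.
Proof.
move=> hN; apply/matrixP => x y.
have hx : (off + x < N)%N by apply: leq_trans hN; rewrite ltn_add2l.
have hy : (off + y < N)%N by apply: leq_trans hN; rewrite ltn_add2l.
by rewrite mxE (mx_atE _ hx hy) mxE /= !leq_addr /= !addKn mx_at_ord.
Qed.

Lemma embed_mx_row N off M (A : 'M[R]_M) (i j : 'I_N) :
  (i < off)%N -> embed_mx N off A i j = 0.
Proof. by move=> io; rewrite mxE leqNgt io. Qed.

Lemma mx_eval0 N (C : 'M[R]_N) : mx_eval 0 C = 0.
Proof. by rewrite /mx_eval size_poly0 big_ord0. Qed.

Lemma mx_eval_widen N (g : {poly R}) (C : 'M[R]_N) K : (size g <= K)%N ->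
  mx_eval g C = \sum_(k < K) g`_k *: C ^+ k.
Proof.
move=> gK; rewrite /mx_eval (big_ord_widen K (fun k => g`_k *: C ^+ k)) // big_mkcond.
by apply: eq_bigr => k _; case: ltnP => // kg; rewrite nth_default // scale0r.
Qed.

Lemma mx_eval_zero_row N (g : {poly R}) (C : 'M[R]_N) (r j : 'I_N) :
  (forall t, C r t = 0) -> r != j -> mx_eval g C r j = 0.
Proof.
move=> Cr rj; rewrite summxE big1 // => -[[|k] ?] _; rewrite mxE /=.
  by rewrite expr0 mxE (negbTE rj) mulr0.
by rewrite exprS -mulmxE mxE big1 ?mulr0 // => l _; rewrite Cr mul0r.
Qed.

End Blocks.

Section EntryPolynomials.
Variables (R : comRingType) (n : nat).
Implicit Types (f : {poly 'M[R]_n.+1}) (C : 'M[R]_n.+1).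

Lemma entry_poly_coef f i j k : (entry_poly f i j)`_k = f`_k i j.
Proof. by rewrite coef_poly; case: ltnP => // fk; rewrite nth_default // mxE. Qed.

Lemma entry_poly_lower f (i j : 'I_n.+1) :
  poly_over_T f -> (j < i)%N -> entry_poly f i j = 0.
Proof. by move=> hf ji; apply/polyP => k; rewrite entry_poly_coef coef0 hf. Qed.

Lemma rsubst_entry f C i j :
  rsubst f C i j = \sum_(l < n.+1) mx_eval (entry_poly f i l) C l j.
Proof.
rewrite summxE; under eq_bigr do rewrite -mulmxE mxE.
under [RHS]eq_bigr do rewrite (mx_eval_widen _ (size_poly _ _)) summxE.
rewrite exchange_big; apply: eq_bigr => k _; apply: eq_bigr => l _.
by rewrite mxE entry_poly_coef.
Qed.

Lemma upper_tri_rsubst f C : poly_over_T f -> upper_tri C -> upper_tri (rsubst f C).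
Proof.
by move=> hf hC; apply: upper_tri_sum => k; apply: upper_tri_mul (upper_tri_exp _ hC).
Qed.

End EntryPolynomials.

Lemma ord_down_ind N (P : 'I_N -> Prop) :
  (forall l : 'I_N, (forall l' : 'I_N, (l < l')%N -> P l') -> P l) -> forall l, P l.
Proof.
move=> IH l; have [k] := ubnP (N - l); elim: k l => // k IHk l lk.
by apply: IH => l' ll'; apply: IHk; have := ltn_ord l'; lia.
Qed.

Section IntegerValued.
Variables (R : comRingType) (S I : {pred R}).
Hypothesis S0 : 0 \in S.
Hypothesis I0 : 0 \in I.
Hypothesis I_sub : {in I &, forall x y, x - y \in I}.

Lemma I_add : {in I &, forall x y, x + y \in I}.
Proof. by move=> x y xI yI; rewrite -[y]opprK -[- y]sub0r !I_sub. Qed.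

Lemma I_sum (J : finType) (P : pred J) (F : J -> R) :
  (forall k, P k -> F k \in I) -> \sum_(k | P k) F k \in I.
Proof. by move=> FI; apply: (big_ind (fun x => x \in I)) => //; apply: I_add. Qed.

(* Row [a] of [g(C)] is row [0] of [g] evaluated at the block of [C] starting
   at [a], padded with zeros back to size [m]. *)
Lemma Int_R_of_first_row m (g : {poly R}) :
  (forall C : 'M[R]_m, in_T S C -> forall y : 'I_m, mx_at (mx_eval g C) 0 y \in I) ->
  Int_R m S I g.
Proof.
move=> first_row C hC; split; first by apply: upper_tri_mx_eval; case: hC.
move=> a b ab; set k := (m - a)%N.
have ak : (a + k <= m)%N by rewrite subnKC // ltnW.
have ba : (b - a < m)%N := leq_ltn_trans (leq_subr a b) (ltn_ord b).
have ba_k : (b - a < k)%N by rewrite ltn_sub2r.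
set D := embed_mx m 0 (window_mx a k C).
have hD : in_T S D by apply: in_T_embed S0; apply: in_T_window S0.
suff -> : mx_eval g C a b = mx_at (mx_eval g D) 0 (b - a).
  exact: first_row D hD (Ordinal ba).
rewrite -mx_at_ord -[X in mx_at _ X](addn0 a) -[X in mx_at _ _ X](subnKC ab).
rewrite (mx_at_mx_eval_window _ hC.1 ak) ?subn_gt0 //.
rewrite -(@window_embed _ m 0 k (window_mx a k C)) ?add0n ?leq_subr //.
by rewrite -(mx_at_mx_eval_window _ hD.1) ?add0n ?leq_subr ?subn_gt0.
Qed.

Lemma mx_eval_entry_in N (g : {poly R}) (C : 'M[R]_N) (l j : 'I_N) :
  in_T S C -> Int_R (N - l) S I g -> mx_eval g C l j \in I.
Proof.
move=> hC hg; have [jl|lj] := ltnP j l.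
  by rewrite (upper_tri_mx_eval _ hC.1).
have lk : (l + (N - l) <= N)%N by rewrite subnKC // ltnW.
have := mx_at_in_T (hg _ (in_T_window l (N - l) hC S0)) I0 (leq0n (j - l)%N).
rewrite -(mx_at_mx_eval_window _ hC.1 lk) ?subn_gt0 ?ltn_sub2r //.
by rewrite addn0 subnKC // mx_at_ord.
Qed.

Section RightSubstitution.
Variables (n : nat) (f : {poly 'M[R]_n.+1}).
Hypothesis f_upper : poly_over_T f.

Definition column_Int_R (l : 'I_n.+1) :=
  forall i : 'I_n.+1, (i <= l)%N -> Int_R (n.+1 - l) S I (entry_poly f i l).

Lemma Int_T_of_entries : (forall l, column_Int_R l) -> Int_T S I f.
Proof.
move=> Hf; split=> // C hC; split; first exact: upper_tri_rsubst hC.1.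
move=> i j _; rewrite rsubst_entry; apply: I_sum => // l _.
have [li|il] := ltnP l i; first by rewrite entry_poly_lower // mx_eval0 mxE.
exact: mx_eval_entry_in (Hf l i il).
Qed.

(* Put [C'] in the trailing block of an otherwise zero matrix [C]: in
   [f(C)_(i, l + y)] the terms [l' < l] vanish since row [l'] of [C] is zero,
   and the terms [l' > l] lie in [I] by the induction hypothesis. *)
Lemma column_Int_R_down (l : 'I_n.+1) : Int_T S I f ->
  (forall l' : 'I_n.+1, (l < l')%N -> column_Int_R l') -> column_Int_R l.
Proof.
move=> [_ fI] IH i il; apply: Int_R_of_first_row => // C' hC' y.
set C := embed_mx n.+1 l C'.
have hC : in_T S C := in_T_embed n.+1 l hC' S0.
have ly : (l + y < n.+1)%N by rewrite -ltn_subRL.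
set j := Ordinal ly.
have rest : \sum_(l' < n.+1 | l' != l) mx_eval (entry_poly f i l') C l' j \in I.
  apply: I_sum => // l' l'l; have [l'_lt|l_le] := ltnP l' l.
    rewrite mx_eval_zero_row // => [t|]; first exact: embed_mx_row.
    by apply: contraTneq l'_lt => ->; rewrite -leqNgt leq_addr.
  apply: mx_eval_entry_in (IH l' _ i (leq_trans il l_le)) => //.
  by rewrite ltn_neqAle eq_sym l'l.
have := I_sub ((fI C hC).2 i j (leq_trans il (leq_addr _ _))) rest.
rewrite rsubst_entry (bigD1 l) //= addrK -mx_at_ord /= -[X in mx_at _ X](addn0 l).
have ln : (l + (n.+1 - l) <= n.+1)%N by rewrite subnKC // ltnW.
by rewrite (mx_at_mx_eval_window _ hC.1 ln) ?subn_gt0 // window_embed.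
Qed.

Lemma Int_T_entrywise : Int_T S I f <->
  forall i j : 'I_n.+1, (i <= j)%N -> Int_R (n.+1 - j) S I (entry_poly f i j).
Proof.
split=> [fI i j|Hf]; last by apply: Int_T_of_entries => l i; apply: Hf.
exact: (ord_down_ind (fun l => @column_Int_R_down l fI) j i).
Qed.

End RightSubstitution.

End IntegerValued.

Section AntiTranspose.
Variable R : comRingType.

Definition antitrmx N (A : 'M[R]_N) : 'M[R]_N :=
  \matrix_(i, j) A (rev_ord j) (rev_ord i).

Lemma antitrmxK N : involutive (@antitrmx N).
Proof. by move=> A; apply/matrixP => i j; rewrite !mxE !rev_ordK. Qed.

Lemma antitrmx0 N : antitrmx (0 : 'M[R]_N) = 0.
Proof. by apply/matrixP => i j; rewrite !mxE. Qed.

Lemma antitrmx1 N : antitrmx (1 : 'M[R]_N) = 1.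
Proof. by apply/matrixP => i j; rewrite !mxE (inj_eq rev_ord_inj) eq_sym. Qed.

Lemma antitrmxD N (A B : 'M[R]_N) : antitrmx (A + B) = antitrmx A + antitrmx B.
Proof. by apply/matrixP => i j; rewrite !mxE. Qed.

Lemma antitrmx_sum N (J : Type) (r : seq J) (F : J -> 'M[R]_N) :
  antitrmx (\sum_(k <- r) F k) = \sum_(k <- r) antitrmx (F k).
Proof. exact: (big_morph _ (@antitrmxD N) (antitrmx0 N)). Qed.

Lemma antitrmx_mul N (A B : 'M[R]_N) : antitrmx (A * B) = antitrmx B * antitrmx A.
Proof.
apply/matrixP => i j; rewrite -!mulmxE !mxE (reindex_inj rev_ord_inj).
by apply: eq_bigr => l _; rewrite !mxE mulrC.
Qed.

Lemma antitrmxX N (A : 'M[R]_N) k : antitrmx (A ^+ k) = antitrmx A ^+ k.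
Proof.
elim: k => [|k IH]; first by rewrite !expr0 antitrmx1.
by rewrite exprS antitrmx_mul IH exprSr.
Qed.

Lemma rev_ord_leq N (i j : 'I_N) : (rev_ord i <= rev_ord j)%N = (j <= i)%N.
Proof. by rewrite /=; have := ltn_ord i; have := ltn_ord j; lia. Qed.

Lemma subn_rev_ord N (i : 'I_N) : (N - rev_ord i = i.+1)%N.
Proof. by rewrite /=; have := ltn_ord i; lia. Qed.

Lemma upper_tri_antitrmx N (A : 'M[R]_N) : upper_tri A -> upper_tri (antitrmx A).
Proof. by move=> hA i j ji; rewrite mxE hA // ltnNge rev_ord_leq -ltnNge. Qed.

Lemma in_T_antitrmx N (P : {pred R}) (A : 'M[R]_N) : in_T P A -> in_T P (antitrmx A).
Proof.
case=> hA hP; split; first exact: upper_tri_antitrmx.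
by move=> i j ij; rewrite mxE hP ?rev_ord_leq.
Qed.

Lemma poly_over_T_antitrmx n (f : {poly 'M[R]_n.+1}) :
  poly_over_T f -> poly_over_T (map_poly (@antitrmx _) f).
Proof. by move=> hf k; rewrite coef_map_id0 ?antitrmx0 //; apply: upper_tri_antitrmx. Qed.

Lemma lsubst_antitrmx n (f : {poly 'M[R]_n.+1}) C :
  lsubst f C = antitrmx (rsubst (map_poly (@antitrmx _) f) (antitrmx C)).
Proof.
rewrite /rsubst antitrmx_sum size_map_inj_poly ?antitrmx0 //; last first.
  exact: can_inj (@antitrmxK _).
apply: eq_bigr => k _.
by rewrite antitrmx_mul antitrmxX coef_map_id0 ?antitrmx0 // !antitrmxK.
Qed.

Lemma entry_poly_antitrmx n (f : {poly 'M[R]_n.+1}) i j :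
  entry_poly (map_poly (@antitrmx _) f) i j = entry_poly f (rev_ord j) (rev_ord i).
Proof.
by apply/polyP => k; rewrite !entry_poly_coef coef_map_id0 ?antitrmx0 // mxE.
Qed.

Lemma Int_T_l_antitrmx n (S I : {pred R}) (f : {poly 'M[R]_n.+1}) :
  poly_over_T f -> Int_T_l S I f <-> Int_T S I (map_poly (@antitrmx _) f).
Proof.
move=> hf; split=> -[_ fI].
  split=> [|C hC]; first exact: poly_over_T_antitrmx.
  by have := in_T_antitrmx (fI _ (in_T_antitrmx hC)); rewrite lsubst_antitrmx !antitrmxK.
split=> // C hC; rewrite lsubst_antitrmx.
exact/in_T_antitrmx/fI/in_T_antitrmx.
Qed.

End AntiTranspose.

Theorem theorem4p2 (R : comRingType) (S I : {pred R}) (n : nat)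
  (f : {poly 'M[R]_n.+1}) :
  is_subring S -> is_ideal_of S I -> poly_over_T f ->
  (Int_T S I f <->
     (forall i j : 'I_n.+1, (i <= j)%N -> Int_R (n.+1 - j) S I (entry_poly f i j)))
  /\
  (Int_T_l S I f <->
     (forall i j : 'I_n.+1, (i <= j)%N -> Int_R i.+1 S I (entry_poly f i j))).
Proof.
move=> [S1 [S_sub _]] [_ [I0 [I_sub _]]] hf.
have S0 : 0 \in S by rewrite -(subrr 1) S_sub.
split; first exact: Int_T_entrywise.
rewrite Int_T_l_antitrmx // Int_T_entrywise //; last exact: poly_over_T_antitrmx.
split=> Hf i j ij.
  have := Hf (rev_ord j) (rev_ord i); rewrite rev_ord_leq entry_poly_antitrmx.
  by rewrite (subn_rev_ord i) !rev_ordK; apply.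
have := Hf (rev_ord j) (rev_ord i); rewrite rev_ord_leq entry_poly_antitrmx.
by rewrite -(subn_rev_ord (rev_ord j)) rev_ordK; apply.
Qed.
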